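(* Let $\mathcal X$ be a finite-dimensional operator system and $\mathcal X_0\subsetneq\mathcal X$ a proper operator subsystem. Then $\mathrm{Ind}_{\mathrm{CP}}(\mathcal X:\mathcal X_0)>1$.
   Context: For an operator system $\mathcal X$ with unit $1$, $\mathrm{CP}(\mathcal X)$ denotes the completely positive maps $\mathcal X\to\mathcal X$ and $\mathrm{CP}_1(\mathcal X)$ the set of $\varphi\in\mathrm{CP}(\mathcal X)$ with $\varphi(\mathbb C1)\subset\mathbb C1$. For an operator subsystem $\mathcal X_0\subset\mathcal X$, $\mathrm{Ind}_{\mathrm{CP}}(\mathcal X:\mathcal X_0)=\inf\{\|\varphi(1)\|:\varphi\in\mathrm{CP}_1(\mathcal X),\ \varphi(\mathcal X)\subset\mathcal X_0,\ \varphi-\mathrm{id}_{\mathcal X}\in\mathrm{CP}(\mathcal X)\}$ ($\infty$ if empty). *)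

From HB Require Import structures.
From mathcomp Require Import all_boot all_order all_algebra.
From mathcomp Require Import complex.
From mathcomp Require Import all_classical all_reals ereal.
Set Implicit Arguments. Unset Strict Implicit. Unset Printing Implicit Defensive.
Import Order.TTheory GRing.Theory Num.Theory.
Local Open Scope ring_scope.
Local Open Scope classical_set_scope.

(* Abstract (Choi--Effros) operator systems over the complex field R[i],     *)

Section OpSys.
Variable R : realType.
Local Notation C := (R[i]).
Variable V : vectType C.

Definition mx_adj (star : V -> V) n (x : 'M[V]_n) : 'M[V]_n :=
  \matrix_(i, j) star (x j i).

(* the congruence  alpha^* x alpha  for alpha : 'M[C]_(n, m), x : 'M[V]_n *)
Definition mx_congr n m (alpha : 'M[C]_(n, m)) (x : 'M[V]_n) : 'M[V]_m :=
  \matrix_(i, j) \sum_(k < n) \sum_(l < n) ((alpha k i)^* * alpha l j) *: x k l.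

Definition mx_rscale n (r : R) (x : 'M[V]_n) : 'M[V]_n :=
  \matrix_(i, j) ((r%:C)%C *: x i j).

Definition mx_unit n (e : V) : 'M[V]_n :=
  \matrix_(i, j) (if i == j then e else 0).

Unset Implicit Arguments.
Record opsys := OpSys {
  os_star : V -> V;
  os_unit : V;
  os_cone : forall n, set 'M[V]_n;
  os_starD : forall x y, os_star (x + y) = os_star x + os_star y;
  os_starZ : forall (a : C) x, os_star (a *: x) = a^* *: os_star x;
  os_starK : forall x, os_star (os_star x) = x;
  os_unit_sa : os_star os_unit = os_unit;
  os_cone_sa : forall n x, os_cone n x -> mx_adj os_star x = x;
  os_coneD : forall n x y, os_cone n x -> os_cone n y -> os_cone n (x + y);
  os_coneZ : forall n (r : R) x, 0 <= r -> os_cone n x ->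
                os_cone n (mx_rscale r x);
  os_cone_proper : forall n x, os_cone n x -> os_cone n (- x) -> x = 0;
  os_cone_congr : forall n m (alpha : 'M[C]_(n, m)) x,
      os_cone n x -> os_cone m (mx_congr alpha x);
  os_unit_order : forall n x, mx_adj os_star x = x ->
      exists2 r : R, 0 < r & os_cone n (mx_rscale r (mx_unit n os_unit) + x);
  os_unit_arch : forall n x, mx_adj os_star x = x ->
      (forall r : R, 0 < r -> os_cone n (mx_rscale r (mx_unit n os_unit) + x)) ->
      os_cone n x
}.

Set Implicit Arguments.

Variable X : opsys.

Definition os_pos n (x : 'M[V]_n) := os_cone X n x.

Definition ampl (phi : V -> V) n (x : 'M[V]_n) : 'M[V]_n := map_mx phi x.

Definition is_CP (phi : 'End(V)) :=
  forall n (x : 'M[V]_n), os_pos x -> os_pos (ampl phi x).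

Definition is_CP1 (phi : 'End(V)) :=
  is_CP phi /\ exists c : C, phi (os_unit X) = c *: os_unit X.

(* the operator system norm:
   ||x|| = inf { r >= 0 : [[r 1, x], [x^*, r 1]] in M_2(X)^+ } *)
Definition os_block2 (r : R) (x : V) : 'M[V]_2 :=
  \matrix_(i, j)
     (if i == j then (r%:C)%C *: os_unit X
      else if (i : nat) == 0%N then x else os_star X x).

Definition os_norm (x : V) : R :=
  inf [set r : R | 0 <= r /\ os_pos (os_block2 r x)].

(* operator subsystems: self-adjoint subspaces containing the unit
   (with the matrix order inherited from X) *)
Definition is_subsystem (X0 : {vspace V}) :=
  os_unit X \in X0 /\ forall x, x \in X0 -> os_star X x \in X0.

(* Ind_CP(X : X0), valued in the extended reals (+oo if the set is empty) *)
Definition Ind_CP (X0 : {vspace V}) : \bar R :=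
  ereal_inf [set (os_norm (phi (os_unit X)))%:E | phi in
    [set phi : 'End(V) | is_CP1 phi
       /\ (forall x, phi x \in X0)
       /\ is_CP (phi - \1)%VF]].

End OpSys.

From HB Require Import structures.
From mathcomp Require Import all_boot all_order all_algebra.
From mathcomp Require Import complex.
From mathcomp Require Import all_classical all_reals ereal.
From mathcomp Require Import normedtype derive.
Import Order.TTheory GRing.Theory Num.Theory.
Import numFieldNormedType.Exports.
Local Open Scope ring_scope.

(* Pick a self-adjoint [x] outside [X0] with [-r e <= x <= r e].  As [X] is finite
   dimensional, [x] has a positive distance [d], in the order-unit seminorm, from the
   self-adjoint part of [X0]: along a real spanning list, the distance to the span of
   [u :: s] is the infimum over [b] of the continuous, positive and coercive function
   [b |-> dist (x - b u, span s)].  An admissible [phi] maps [e] to [(1 + tau) e] and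
   [psi = phi - id] is CP with [psi e = tau e], so [-r tau e <= phi x - x <= r tau e].
   As [phi x] is self-adjoint and lies in [X0], [d <= r tau], whence
   [||phi e|| >= 1 + tau >= 1 + d / r > 1]. *)

Lemma lipschitz_continuous (R : realType) (F : R -> R) (k : R) : 0 < k ->
  (forall a b, `|F a - F b| <= k * `|a - b|) -> continuous F.
Proof.
move=> k_gt0 lipF x; apply/cvgrPdist_lt => eps eps_gt0.
near=> t; apply: le_lt_trans (lipF x t) _; rewrite -ltr_pdivlMl //.
near: t; apply/nbhs_ballP; exists (k^-1 * eps) => /=; last by move=> t.
by rewrite mulr_gt0 ?invr_gt0.
Unshelve. all: by end_near.
Qed.

Lemma continuous_coercive_inf_gt0 (R : realType) (F : R -> R) (M : R) :
  continuous F -> (forall b, 0 < F b) -> (forall b, M < `|b| -> 1 <= F b) ->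
  exists2 d : R, 0 < d & forall b, d <= F b.
Proof.
move=> contF F_gt0 F_far.
have NMM : - `|M| <= `|M| by rewrite (le_trans _ (normr_ge0 M)) // oppr_le0.
have [c _ Fc_min] := EVT_min NMM (continuous_subspaceT contF).
exists (Num.min 1 (F c)); first by rewrite lt_min ltr01 F_gt0.
move=> b; case: (lerP `|b| `|M|) => bM.
  by rewrite ge_min (Fc_min b) ?orbT // in_itv /= -ler_norml.
by rewrite ge_min F_far // (le_lt_trans (ler_norm M)).
Qed.

Arguments os_star {R V} o.
Arguments os_unit {R V} o.
Arguments os_cone {R V} o n.
Arguments os_starD {R V} o.
Arguments os_starZ {R V} o.
Arguments os_starK {R V} o.
Arguments os_unit_sa {R V} o.
Arguments os_cone_sa {R V o n x}.
Arguments os_coneD {R V o n x y}.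
Arguments os_coneZ {R V o n r x}.
Arguments os_cone_proper {R V o n x}.
Arguments os_cone_congr {R V o n m} alpha {x}.
Arguments os_unit_order {R V o n x}.
Arguments os_unit_arch {R V o n x}.

Section UnitBounds.
Variables (R : realType) (V : vectType R[i]) (X : opsys R V).

Local Notation st := (os_star X).
Local Notation e := (os_unit X).
Local Notation "r %:C" := (real_complex_def (Phant R) r) : ring_scope.

Lemma realC_real (r : R) : r%:C \is Num.real.
Proof.
rewrite realE (_ : 0 = (0 : R)%:C) // !lecR.
by case: (lerP 0 r) => [|/ltW ->]; rewrite ?orbT.
Qed.

Lemma conj_realC (r : R) : (r%:C)^* = r%:C.
Proof. exact/conj_Creal/realC_real. Qed.

Lemma scale_realCA (r s : R) (z : V) : r%:C *: (s%:C *: z) = (r * s)%:C *: z.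
Proof. by rewrite scalerA rmorphM. Qed.

Lemma st0 : st 0 = 0.
Proof. by rewrite -(scale0r 0) os_starZ conjC0 !scale0r. Qed.

Lemma stN z : st (- z) = - st z.
Proof. by rewrite -scaleN1r os_starZ conjCN1 scaleN1r. Qed.

Lemma stB z w : st (z - w) = st z - st w.
Proof. by rewrite os_starD stN. Qed.

Lemma st_realZ (r : R) z : st (r%:C *: z) = r%:C *: st z.
Proof. by rewrite os_starZ conj_realC. Qed.

Lemma st_subZ u x (b : R) : st u = u -> st x = x ->
  st (x - b%:C *: u) = x - b%:C *: u.
Proof. by move=> su sx; rewrite stB st_realZ su sx. Qed.

Lemma st_sum n (f : 'I_n -> V) : st (\sum_(i < n) f i) = \sum_(i < n) st (f i).
Proof. exact: (big_morph st (os_starD X) st0). Qed.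

Lemma sa_add_st z : st (z + st z) = z + st z.
Proof. by rewrite os_starD os_starK addrC. Qed.

Lemma sa_i_sub_st z : st ('i *: (z - st z)) = 'i *: (z - st z).
Proof. by rewrite os_starZ stB os_starK conjCi scaleNr -scalerN opprB. Qed.

Lemma sa_decomp (c : R[i]) z : c *: z + st (c *: z) =
  (complex.Re c)%:C *: (z + st z) + (complex.Im c)%:C *: ('i *: (z - st z)).
Proof.
set a := (complex.Re c)%:C; set b := (complex.Im c)%:C.
have c_def : c = a + 'i * b by rewrite -complexiE; apply: complexE.
have cc_def : c^* = a - 'i * b by rewrite {1}c_def conjC_rect // realC_real.
rewrite os_starZ cc_def {1}c_def !scalerDl !scalerDr scaleNr scalerN !scalerA.
rewrite -!addrA; congr (_ + _).
by rewrite scalerN scalerA [b * 'i]mulrC addrCA.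
Qed.

Definition pos (z : V) := os_pos X (const_mx z : 'M_1).

Lemma pos_mx1 (x : 'M[V]_1) : os_cone X 1 x = pos (x ord0 ord0).
Proof. by congr os_cone; apply/matrixP => i j; rewrite !ord1 mxE. Qed.

Lemma posD z w : pos z -> pos w -> pos (z + w).
Proof. by move=> /os_coneD pzw /pzw; rewrite pos_mx1 !mxE. Qed.

Lemma posZ (r : R) z : 0 <= r -> pos z -> pos (r%:C *: z).
Proof. by move=> r_ge0 /(os_coneZ r_ge0); rewrite pos_mx1 !mxE. Qed.

Lemma pos_anti z : pos z -> pos (- z) -> z = 0.
Proof.
move=> pz pNz; have := os_cone_proper pz; rewrite pos_mx1 !mxE => /(_ pNz).
by move=> /matrixP /(_ ord0 ord0); rewrite !mxE.
Qed.

Lemma pos_sa z : pos z -> st z = z.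
Proof. by move=> /os_cone_sa /matrixP /(_ ord0 ord0); rewrite !mxE. Qed.

Lemma mx_adj_const z : st z = z -> mx_adj st (const_mx z : 'M_1) = const_mx z.
Proof. by move=> sz; apply/matrixP => i j; rewrite !mxE. Qed.

Lemma mx_shift_unit (r : R) z :
  mx_rscale r (mx_unit 1 e) + const_mx z = const_mx (r%:C *: e + z).
Proof. by apply/matrixP => i j; rewrite !mxE !ord1. Qed.

Lemma pos_unit_shift z : st z = z -> exists2 r : R, 0 < r & pos (r%:C *: e + z).
Proof.
move=> /mx_adj_const /os_unit_order [r r_gt0 pr].
by exists r; rewrite // /pos -mx_shift_unit.
Qed.

Lemma pos_arch z :
  st z = z -> (forall r : R, 0 < r -> pos (r%:C *: e + z)) -> pos z.
Proof.
move=> /mx_adj_const /os_unit_arch arch pr; apply: arch => r r_gt0.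
by rewrite mx_shift_unit; apply: pr.
Qed.

Lemma pos_unit : pos e.
Proof.
have [r r_gt0] := pos_unit_shift _ st0; rewrite addr0.
have r1_ge0 : 0 <= r^-1 by rewrite invr_ge0 ltW.
move=> /(posZ _ _ r1_ge0).
by rewrite scale_realCA mulVf ?gt_eqF // rmorph1 scale1r.
Qed.

Lemma pos_unit_le (s t : R) z : s <= t -> pos (s%:C *: e + z) -> pos (t%:C *: e + z).
Proof.
rewrite -subr_ge0 => ts_ge0 /posD /(_ (posZ _ _ ts_ge0 pos_unit)).
by rewrite addrAC -scalerDl -rmorphD subrKC.
Qed.

Lemma sa_eq0_of_unit_eq0 z : e = 0 -> st z = z -> z = 0.
Proof.
move=> e0 sz; have sNz : st (- z) = - z by rewrite stN sz.
have [r _ pz] := pos_unit_shift _ sz; have [t _ pNz] := pos_unit_shift _ sNz.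
by apply: pos_anti; [move: pz | move: pNz]; rewrite e0 scaler0 add0r.
Qed.

(* Every self-adjoint [w + w^*] vanishes, so the involution is [-id];
   applied to [i v] this gives [i v = - i v]. *)
Lemma unit_eq0_trivial (v : V) : e = 0 -> v = 0.
Proof.
move=> e0; have st_anti w : st w = - w.
  apply/eqP; rewrite -addr_eq0; apply/eqP/sa_eq0_of_unit_eq0 => //.
  by rewrite addrC sa_add_st.
have := st_anti ('i *: v); rewrite os_starZ conjCi st_anti scalerN scaleNr opprK.
move=> /eqP; rewrite -subr_eq0 opprK -scalerDl scaler_eq0 => /orP [|/eqP //].
by rewrite -mulr2n mulrn_eq0 /= (negbTE (neq0Ci _)).
Qed.

Definition unit_bound (z : V) (s : R) := pos (s%:C *: e + z) /\ pos (s%:C *: e - z).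

Lemma unit_boundD z w s t :
  unit_bound z s -> unit_bound w t -> unit_bound (z + w) (s + t).
Proof.
move=> [pz pNz] [pw pNw]; rewrite /unit_bound rmorphD scalerDl opprD.
by split; rewrite addrACA; apply: posD.
Qed.

Lemma unit_boundN z s : unit_bound z s -> unit_bound (- z) s.
Proof. by move=> [pz pNz]; split; rewrite ?opprK. Qed.

Lemma unit_boundZ (r : R) z s : unit_bound z s -> unit_bound (r%:C *: z) (`|r| * s).
Proof.
wlog r_ge0 : r z / 0 <= r.
  move=> wlog_r bz; have [r_ge0|r_lt0] := lerP 0 r; first exact: wlog_r.
  have := wlog_r (- r) (- z) _ (unit_boundN _ _ bz).
  by rewrite oppr_ge0 rmorphN scaleNr scalerN opprK normrN; apply; apply: ltW.
move=> [pz pNz]; rewrite ger0_norm //.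
by split; [move: (posZ _ _ r_ge0 pz) | move: (posZ _ _ r_ge0 pNz)];
  rewrite scalerDr ?scalerN scale_realCA.
Qed.

Lemma unit_bound_le z s t : s <= t -> unit_bound z s -> unit_bound z t.
Proof. by move=> le_st [pz pNz]; split; apply: pos_unit_le le_st _. Qed.

Lemma unit_bound_sa z s : unit_bound z s -> st z = z.
Proof.
by move=> [/pos_sa]; rewrite os_starD st_realZ os_unit_sa => /addrI.
Qed.

Lemma unit_bound_exists z : st z = z -> exists s, unit_bound z s.
Proof.
move=> sz; have sNz : st (- z) = - z by rewrite stN sz.
have [r r_gt0 pz] := pos_unit_shift _ sz; have [t t_gt0 pNz] := pos_unit_shift _ sNz.
by exists (r + t); split; [apply: pos_unit_le pz | apply: pos_unit_le pNz];
  rewrite ?lerDl ?lerDr ltW.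
Qed.

Lemma unit_bound_eq0 z : st z = z -> (forall s, 0 < s -> unit_bound z s) -> z = 0.
Proof.
move=> sz bz; have sNz : st (- z) = - z by rewrite stN sz.
by apply: pos_anti; apply: pos_arch => // r /bz [].
Qed.

Lemma CP_pos phi z : is_CP X phi -> pos z -> pos (phi z).
Proof. by move=> cp pz; have := cp 1 _ pz; rewrite /os_pos /ampl pos_mx1 !mxE. Qed.

Lemma CP_unit_bound psi (tau : R) z s : is_CP X psi -> psi e = tau%:C *: e ->
  unit_bound z s -> unit_bound (psi z) (s * tau).
Proof.
move=> cp psie [pz pNz].
by split; [move: (CP_pos _ _ cp pz) | move: (CP_pos _ _ cp pNz)];
  rewrite linearD linearZ ?linearN /= psie scale_realCA.
Qed.

Fixpoint rspan (s : seq V) (z : V) : Prop :=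
  if s is u :: s' then exists b : R, rspan s' (z - b%:C *: u) else z = 0.

Lemma rspan0 s : rspan s 0.
Proof. by elim: s => //= u s IHs; exists 0; rewrite rmorph0 scale0r subr0. Qed.

Lemma rspanD s y z : rspan s y -> rspan s z -> rspan s (y + z).
Proof.
elim: s y z => [|u s IHs] y z /=; first by move=> -> ->; rewrite addr0.
move=> [b sy] [c sz]; exists (b + c); have := IHs _ _ sy sz.
by rewrite rmorphD scalerDl opprD addrACA.
Qed.

Lemma rspanZ s (r : R) z : rspan s z -> rspan s (r%:C *: z).
Proof.
elim: s z => [|u s IHs] z /=; first by move=> ->; rewrite scaler0.
by move=> [b sz]; exists (r * b); have := IHs _ sz; rewrite scalerBr scale_realCA.
Qed.

Lemma rspan_mem s u (r : R) : u \in s -> rspan s (r%:C *: u).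
Proof.
elim: s => [//|v s IHs]; rewrite inE => /orP [/eqP ->|us] /=.
  by exists r; rewrite subrr; apply: rspan0.
by exists 0; rewrite rmorph0 scale0r subr0; apply: IHs.
Qed.

Lemma rspan_subv (U : {vspace V}) s z : {subset s <= U} -> rspan s z -> z \in U.
Proof.
elim: s z => [|u s IHs] z /= sU; first by move=> ->; rewrite mem0v.
move=> [b szbu]; have sU' : {subset s <= U} by move=> v vs; rewrite sU // inE vs orbT.
by rewrite -(subrK (b%:C *: u) z) memvD ?(IHs _ sU' szbu) // memvZ // sU ?mem_head.
Qed.

Definition sa_gens (U : {vspace V}) : seq V :=
  [seq b + st b | b <- vbasis U] ++ [seq 'i *: (b - st b) | b <- vbasis U].

Lemma sa_gens_sa U : {in sa_gens U, forall u, st u = u}.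
Proof.
by move=> u; rewrite mem_cat => /orP [] /mapP [b _ ->]; rewrite ?sa_add_st ?sa_i_sub_st.
Qed.

Lemma sa_gens_subv (U : {vspace V}) :
  {in U, forall z, st z \in U} -> {subset sa_gens U <= U}.
Proof.
move=> stU u; rewrite mem_cat => /orP [] /mapP [b /vbasis_mem bU ->].
  by rewrite memvD ?stU.
by rewrite memvZ // memvB ?stU.
Qed.

Lemma rspan_sa_gens (U : {vspace V}) y : y \in U -> st y = y -> rspan (sa_gens U) y.
Proof.
move=> yU sy; have gens_y2 : rspan (sa_gens U) (y + st y).
  rewrite {1 2}(coord_vbasis yU) st_sum -big_split /=.
  apply: (big_ind (rspan _)); [exact: rspan0 | exact: rspanD |].
  move=> i _; rewrite sa_decomp; apply: rspanD; apply: rspan_mem;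
    rewrite mem_cat; apply/orP; [left | right]; apply: map_f;
    by rewrite mem_nth // size_tuple.
have := rspanZ _ 2^-1 _ gens_y2; rewrite sy scalerDr -scalerDl -rmorphD -mulr2n.
by rewrite -[_ *+ 2]mulr_natr mulVf ?pnatr_eq0 // rmorph1 scale1r.
Qed.

Lemma exists_sa_notin (U : {vspace V}) : {in U, forall z, st z \in U} -> U != fullv ->
  exists2 x, st x = x & x \notin U.
Proof.
move=> stU; rewrite eqEsubv subvf /= => /subvPn [v _ vU].
case: (boolP (v + st v \in U)) => [vvU|]; last by exists (v + st v); rewrite ?sa_add_st.
case: (boolP ('i *: (v - st v) \in U)) => [ivvU|];
  last by exists ('i *: (v - st v)); rewrite ?sa_i_sub_st.
case/negP: vU; have := memvZ 2^-1 (memvB vvU (memvZ 'i ivvU)).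
rewrite scalerA -expr2 sqrCi scaleN1r opprK addrACA subrr addr0.
by rewrite -mulr2n -[v *+ 2]scaler_nat scalerA mulVf ?pnatr_eq0 // scale1r.
Qed.

Section NonzeroUnit.
Hypothesis unit_neq0 : e != 0.

Lemma pos_unit_scale_ge0 (a : R) : pos (a%:C *: e) -> 0 <= a.
Proof.
move=> pa; rewrite leNgt; apply/negP => a_lt0.
have Na1_ge0 : 0 <= - a^-1 by rewrite oppr_ge0 invr_le0 ltW.
have := posZ _ _ Na1_ge0 pa; rewrite scale_realCA mulNr mulVf ?lt_eqF //.
rewrite rmorphN rmorph1 scaleN1r => pNe.
by move/negP: unit_neq0; apply; apply/eqP/pos_anti => //; apply: pos_unit.
Qed.

Lemma unit_bound_ge0 z s : unit_bound z s -> 0 <= s.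
Proof.
move=> [pz pNz]; have := posD _ _ pz pNz.
rewrite addrACA subrr addr0 -scalerDl -rmorphD => /pos_unit_scale_ge0.
by rewrite -mulr2n pmulrn_lge0.
Qed.

(* Compressing the defining 2x2 block by the column [1; -1] leaves [2 (r - a) e]. *)
Lemma os_norm_unit_ge (a : R) : a <= os_norm X (a%:C *: e).
Proof.
have sae : st (a%:C *: e) = a%:C *: e by rewrite st_realZ os_unit_sa.
apply: lb_le_inf => [|r [r_ge0 pr]].
  pose N : 'M[V]_2 := \matrix_(i, j) (if i == j then 0 else a%:C *: e).
  have [|r r_gt0 pr] := @os_unit_order _ _ X _ N.
    by apply/matrixP => i j; rewrite !mxE eq_sym; case: (i == j); rewrite ?st0.
  exists r; split; first exact: ltW.
  move: pr; rewrite /os_pos; congr os_cone; apply/matrixP => i j; rewrite !mxE.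
  by case: (i == j); rewrite ?addr0 // scaler0 add0r; case: ((i : nat) == 0%N).
pose alpha : 'M[R[i]]_(2, 1) := \matrix_(i, j) (if (i : nat) == 0%N then 1 else -1).
have := os_cone_congr alpha pr; rewrite pos_mx1 !mxE.
rewrite !big_ord_recl !big_ord0 !mxE /= conjC1 conjCN1 !mulr1 !mul1r mulrNN mulr1.
rewrite scale1r !scaleN1r sae !addr0 [_ + r%:C *: e]addrC -scalerBl -rmorphB.
rewrite -scalerDl -rmorphD => /pos_unit_scale_ge0.
by rewrite -mulr2n pmulrn_lge0 // subr_ge0.
Qed.

Lemma CP_sub_id_unit phi : is_CP1 X phi -> is_CP X (phi - \1)%VF ->
  exists2 tau : R, (phi - \1)%VF e = tau%:C *: e & phi e = (1 + tau)%:C *: e.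
Proof.
move=> [_ [c phie]]; set psi := (phi - \1)%VF => cp_psi.
have psie : psi e = (c - 1) *: e.
  by rewrite add_lfunE opp_lfunE id_lfunE phie scalerBl scale1r.
have : pos ((c - 1) *: e) by rewrite -psie; apply: CP_pos cp_psi pos_unit.
move=> /pos_sa; rewrite os_starZ os_unit_sa.
move=> /eqP; rewrite -subr_eq0 -scalerBl scaler_eq0 (negbTE unit_neq0) orbF subr_eq0.
move=> /eqP/CrealP/Creal_ReP c1_real.
have [tau c1_tau] : exists tau : R, c - 1 = tau%:C.
  by exists (complex.Re (c - 1)); rewrite complexRe c1_real.
exists tau; first by rewrite psie c1_tau.
by rewrite phie -[c](subrK 1) c1_tau addrC rmorphD rmorph1.
Qed.

Local Open Scope classical_set_scope.

Definition udist_set s x := [set t | exists2 y, rspan s y & unit_bound (y - x) t].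
Definition udist s x := inf (udist_set s x).

Lemma udist_le s x y t : rspan s y -> unit_bound (y - x) t -> udist s x <= t.
Proof.
move=> sy bt; apply: ge_inf; last by exists y.
by exists 0 => r [z _ /unit_bound_ge0].
Qed.

Lemma udist_ge s x d : st x = x ->
  (forall y t, rspan s y -> unit_bound (y - x) t -> d <= t) -> d <= udist s x.
Proof.
move=> sx d_lb; apply: lb_le_inf; last by move=> t [y sy /d_lb]; apply.
have [t bt] : exists t, unit_bound (- x) t by apply: unit_bound_exists; rewrite stN sx.
by exists t, 0; rewrite ?sub0r //; apply: rspan0.
Qed.

Lemma udist_lipschitz s u x (c : R) b b' : st u = u -> st x = x -> unit_bound u c ->
  udist s (x - b'%:C *: u) <= udist s (x - b%:C *: u) + c * `|b - b'|.
Proof.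
move=> su sx bu; rewrite -lerBlDr; apply: udist_ge => [|y t sy bt].
  exact: st_subZ.
rewrite lerBlDr; apply: udist_le sy _.
have -> : y - (x - b'%:C *: u) = y - (x - b%:C *: u) + (b' - b)%:C *: u.
  rewrite rmorphB scalerBl -[RHS]addrA; congr (y + _).
  by rewrite !opprB [RHS]addrC subrKA.
by rewrite mulrC distrC; apply: unit_boundD bt (unit_boundZ _ _ _ bu).
Qed.

Lemma udist_coercive s u x (c : R) b : st u = u -> st x = x -> 0 < udist s u ->
  unit_bound x c -> (1 + c) / udist s u < `|b| -> 1 <= udist s (x - b%:C *: u).
Proof.
move=> su sx du_gt0 bx; rewrite ltr_pdivrMr // => b_large.
have b_gt0 : 0 < `|b|.
  rewrite -(pmulr_lgt0 _ du_gt0) (le_lt_trans _ b_large) //.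
  by rewrite addr_ge0 ?(unit_bound_ge0 _ _ bx).
apply: udist_ge => [|y t sy bt]; first exact: st_subZ.
have := unit_boundZ (- b^-1) _ _ (unit_boundD _ _ _ _ bt bx).
rewrite opprB -addrA subrK scalerDr scale_realCA mulNr mulVf -?normr_gt0 //.
rewrite rmorphN1 scaleN1r normrN normfV => /(udist_le _ _ _ _ (rspanZ _ _ _ sy)).
rewrite ler_pdivlMl // => /(lt_le_trans b_large).
by rewrite ltrD2r => /ltW.
Qed.

Lemma udist_nil_gt0 x : st x = x -> x != 0 -> 0 < udist [::] x.
Proof.
move=> sx; apply: contraNT; rewrite -leNgt => d_le0.
rewrite -oppr_eq0; apply/eqP/unit_bound_eq0 => [|r r_gt0]; first by rewrite stN sx.
have [|t [y /= -> bt] t_lt] := @inf_adherent _ (udist_set [::] x) r r_gt0.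
  split; last by exists 0 => t [y _ /unit_bound_ge0].
  have [t bt] : exists t, unit_bound (- x) t by apply: unit_bound_exists; rewrite stN sx.
  by exists t, 0; rewrite ?sub0r.
rewrite sub0r in bt; apply: unit_bound_le bt; rewrite ltW //.
by rewrite (lt_le_trans t_lt) // gerDr.
Qed.

Lemma udist_cons_gt0 u s x : st u = u -> st x = x -> ~ rspan (u :: s) x ->
  (forall z, st z = z -> ~ rspan s z -> 0 < udist s z) -> 0 < udist (u :: s) x.
Proof.
move=> su sx nsx udist_s_gt0.
have sxb b := st_subZ u x b su sx.
case: (pselect (rspan s u)) => [spu|nspu].
  have nsx' : ~ rspan s x.
    by move=> spx; apply: nsx; exists 0; rewrite rmorph0 scale0r subr0.
  apply: lt_le_trans (udist_s_gt0 _ sx nsx') _; apply: udist_ge => // y t [b spy].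
  by apply: udist_le; have := rspanD _ _ _ spy (rspanZ _ b _ spu); rewrite subrK.
pose F b := udist s (x - b%:C *: u).
have [c bu] := unit_bound_exists _ su; have [c' bx] := unit_bound_exists _ sx.
have c_ge0 := unit_bound_ge0 _ _ bu.
have F_lip a b : `|F a - F b| <= (c + 1) * `|a - b|.
  rewrite ler_norml; apply/andP; split.
    rewrite lerNl opprB lerBlDl (le_trans (udist_lipschitz _ _ _ _ a b su sx bu)) //.
    by rewrite lerD2l ler_wpM2r ?lerDl.
  rewrite lerBlDl (le_trans (udist_lipschitz _ _ _ _ b a su sx bu)) //.
  by rewrite lerD2l distrC ler_wpM2r ?lerDl.
have F_gt0 b : 0 < F b by apply: udist_s_gt0 => // nsxb; apply: nsx; exists b.
have F_far b : (1 + c') / udist s u < `|b| -> 1 <= F b.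
  exact: (udist_coercive _ _ _ _ _ su sx (udist_s_gt0 _ su nspu) bx).
have F_cont : continuous F := lipschitz_continuous _ _ _ (ltr_wpDl c_ge0 ltr01) F_lip.
have [d d_gt0 F_ge] := continuous_coercive_inf_gt0 _ _ _ F_cont F_gt0 F_far.
apply: lt_le_trans d_gt0 _; apply: udist_ge => // y t [b spy] bt.
apply: le_trans (F_ge b) _; apply: udist_le spy _.
by rewrite opprB addrA subrK.
Qed.

Lemma udist_gt0 s x : {in s, forall u, st u = u} -> st x = x -> ~ rspan s x ->
  0 < udist s x.
Proof.
elim: s x => [|u s IHs] x s_sa sx nsx; first by apply: udist_nil_gt0 => //; apply/eqP.
apply: udist_cons_gt0 => // [|z sz]; first by apply: s_sa; rewrite mem_head.
by apply: IHs => // v vs; apply: s_sa; rewrite inE vs orbT.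
Qed.

Lemma Ind_CP_gt1 (X0 : {vspace V}) : is_subsystem X X0 -> X0 != fullv ->
  (1%:E < Ind_CP X X0)%E.
Proof.
move=> [_ stX0] X0_proper; have [x sx xX0] := exists_sa_notin _ stX0 X0_proper.
pose d := udist (sa_gens X0) x.
have d_gt0 : 0 < d.
  apply: udist_gt0 => //; first exact: sa_gens_sa.
  by move=> /(rspan_subv _ _ _ (sa_gens_subv _ stX0)); apply/negP.
have [c bx0] := unit_bound_exists _ sx.
have c_gt0 : 0 < c + 1 by rewrite ltr_wpDl ?(unit_bound_ge0 _ _ bx0).
have bx : unit_bound x (c + 1) by apply: unit_bound_le bx0; rewrite lerDl.
apply: (@lt_le_trans _ _ (1 + d / (c + 1))%:E); first by rewrite lte_fin ltrDl divr_gt0.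
apply/ereal_infP => _ [phi [cp1_phi [phiX0 cp_psi]] <-]; rewrite lee_fin.
have [tau psie phie] := CP_sub_id_unit _ cp1_phi cp_psi.
have := CP_unit_bound _ _ _ _ cp_psi psie bx.
rewrite add_lfunE opp_lfunE id_lfunE => b_phix.
have s_phix : st (phi x) = phi x.
  by have := unit_bound_sa _ _ b_phix; rewrite stB sx => /addIr.
have := udist_le _ _ _ _ (rspan_sa_gens _ _ (phiX0 x) s_phix) b_phix.
rewrite -ler_pdivrMl // mulrC => d_le.
by rewrite phie (le_trans _ (os_norm_unit_ge _)) // lerD2l.
Qed.

End NonzeroUnit.
End UnitBounds.

Theorem proposition3p2 (R : realType) (V : vectType (R[i])) (X : opsys R V)
    (X0 : {vspace V}) (hX0 : is_subsystem X X0) (hproper : X0 != fullv) :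
  (1%:E < Ind_CP X X0)%E.
Proof.
have [unit0|unit_neq0] := eqVneq (os_unit X) 0; last exact: Ind_CP_gt1.
case/negP: hproper; rewrite eqEsubv subvf /=; apply/subvP => v _.
by rewrite (unit_eq0_trivial _ _ _ v unit0) mem0v.
Qed.
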